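(* Let $(S,d)$ be a metric space. Then $E^S_\bullet\subset J^S_\bullet$ for $\bullet=\mathrm{BL}$ and for $\bullet=\mathrm{FM}$.
   Context: $\mathrm{BL}(S)$ is the space of bounded real-valued Lipschitz functions on $S$, $|f|_L=\sup_{x\neq y}|f(x)-f(y)|/d(x,y)$ (with $|f|_L=0$ on a singleton), $\|f\|_{\mathrm{BL}}=\|f\|_\infty+|f|_L$, $\|f\|_{\mathrm{FM}}=\max(\|f\|_\infty,|f|_L)$, $B^S_\bullet=\{f\in\mathrm{BL}(S):\|f\|_\bullet\le1\}$. Subsets $P\subset S$ carry the restricted metric; $\operatorname{ext}$ denotes extreme points and $\operatorname{ext}_*(B^P_\bullet)=\operatorname{ext}(B^P_\bullet)\setminus\{f:|f|=\mathbf{1}\}$. $M_f=\{x\in S:|f(x)|=\|f\|_\infty\}$. For non-empty $P\subset S$, $f\in\mathrm{BL}(P)$: $\mathcal{E}^{S,0}_P f(x)=\sup_{p\in P}[f(p)-|f|_L d(p,x)]$, $\mathcal{E}^S_P f=\max(\mathcal{E}^{S,0}_P f,-\|f\|_\infty)$. $E^S_{\mathrm{BL}}=\bigcup_{P\subset S\text{ finite}}\mathcal{E}^S_P(\operatorname{ext}_*(B^P_{\mathrm{BL}}))\cup\{\mathbf{1},-\mathbf{1}\}$; $E^S_{\mathrm{FM}}=\bigcup_{P\subset S\text{ finite}}\mathcal{E}^S_P(\operatorname{ext}_*(B^P_{\mathrm{FM}}))\cup\{f\in B^S_{\mathrm{FM}}:|f|=\mathbf{1}\}\cup\{h_P:P\subset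 S\text{ finite, non-empty}\}$, with $h_P(x)=\max\big(-1,\sup_{p\in P}[1-d(x,p)]\big)$. $J^S_{\mathrm{FM}}$ is the set of $f\in B^S_{\mathrm{FM}}$ with $\|f\|_\infty=1$ for which there is a finite non-empty $P_f\subset S$ such that for every $x\in S\setminus M_f$ there exists $p\in P_f$ with $|f(x)-f(p)|=d(x,p)$. $J^S_{\mathrm{BL}}=\{\mathbf{1},-\mathbf{1}\}\cup\hat J^S_{\mathrm{BL}}$, where $\hat J^S_{\mathrm{BL}}$ is the set of $f\in B^S_{\mathrm{BL}}$ with $\|f\|_{\mathrm{BL}}=1$, $f(M_f)=\{\|f\|_\infty,-\|f\|_\infty\}$, and for which there is a finite non-empty $P_f\subset S$ such that for every $x\in S\setminus M_f$ there exists $p\in P_f$ with $|f(x)-f(p)|=(1-\|f\|_\infty)d(x,p)$. *)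

From Stdlib Require Import Reals List.
From Coquelicot Require Import Coquelicot.
Open Scope R_scope.

Section BLdefs.
Context {S : Type} (d : S -> S -> R).

Definition is_metric : Prop :=
  (forall x y, 0 <= d x y) /\
  (forall x y, d x y = 0 <-> x = y) /\
  (forall x y, d x y = d y x) /\
  (forall x y z, d x z <= d x y + d y z).

(* A subset A of S (with the restricted metric); a function f : S -> R is
   regarded as a function on A through its values on A. *)
Definition is_BL (A : S -> Prop) (f : S -> R) : Prop :=
  (exists M, forall x, A x -> Rabs (f x) <= M) /\
  (exists L, forall x y, A x -> A y -> Rabs (f x - f y) <= L * d x y).

Definition sup_norm (A : S -> Prop) (f : S -> R) : R :=
  real (Lub_Rbar (fun r => exists x, A x /\ r = Rabs (f x))).

(* |f|_L on A; the empty supremum (A a singleton) gives 0 *)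
Definition lip (A : S -> Prop) (f : S -> R) : R :=
  real (Lub_Rbar (fun r => exists x y, A x /\ A y /\ x <> y /\
                            r = Rabs (f x - f y) / d x y)).

Definition BL_norm A f := sup_norm A f + lip A f.
Definition FM_norm A f := Rmax (sup_norm A f) (lip A f).

Definition ball_BL A f := is_BL A f /\ BL_norm A f <= 1.
Definition ball_FM A f := is_BL A f /\ FM_norm A f <= 1.

Definition extreme (A : S -> Prop) (B : (S -> R) -> Prop) (f : S -> R) : Prop :=
  B f /\
  forall g h t, B g -> B h -> 0 < t < 1 ->
    (forall x, A x -> f x = t * g x + (1 - t) * h x) ->
    forall x, A x -> g x = h x.

Definition inP (P : list S) : S -> Prop := fun x => In x P.

Definition ext_star_BL (P : list S) f :=
  extreme (inP P) (ball_BL (inP P)) f /\ ~ (forall p, In p P -> Rabs (f p) = 1).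
Definition ext_star_FM (P : list S) f :=
  extreme (inP P) (ball_FM (inP P)) f /\ ~ (forall p, In p P -> Rabs (f p) = 1).

Definition ext0 (P : list S) (f : S -> R) (x : S) : R :=
  real (Lub_Rbar (fun r => exists p, In p P /\ r = f p - lip (inP P) f * d p x)).
Definition ext (P : list S) (f : S -> R) (x : S) : R :=
  Rmax (ext0 P f x) (- sup_norm (inP P) f).

Definition whole : S -> Prop := fun _ => True.

Definition hP (P : list S) (x : S) : R :=
  Rmax (-1) (real (Lub_Rbar (fun r => exists p, In p P /\ r = 1 - d x p))).

Definition E_BL (g : S -> R) : Prop :=
  (exists P f, P <> nil /\ ext_star_BL P f /\ forall x, g x = ext P f x) \/
  (forall x, g x = 1) \/ (forall x, g x = -1).

Definition E_FM (g : S -> R) : Prop :=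
  (exists P f, P <> nil /\ ext_star_FM P f /\ forall x, g x = ext P f x) \/
  (ball_FM whole g /\ forall x, Rabs (g x) = 1) \/
  (exists P, P <> nil /\ forall x, g x = hP P x).

Definition Mset (f : S -> R) (x : S) : Prop := Rabs (f x) = sup_norm whole f.

Definition J_FM (f : S -> R) : Prop :=
  ball_FM whole f /\ sup_norm whole f = 1 /\
  exists Pf : list S, Pf <> nil /\
    forall x, ~ Mset f x -> exists p, In p Pf /\ Rabs (f x - f p) = d x p.

Definition hatJ_BL (f : S -> R) : Prop :=
  is_BL whole f /\ BL_norm whole f = 1 /\
  (forall r, (exists x, Mset f x /\ f x = r) <->
             (r = sup_norm whole f \/ r = - sup_norm whole f)) /\
  exists Pf : list S, Pf <> nil /\
    forall x, ~ Mset f x -> exists p, In p Pf /\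
      Rabs (f x - f p) = (1 - sup_norm whole f) * d x p.

Definition J_BL (f : S -> R) : Prop :=
  (forall x, f x = 1) \/ (forall x, f x = -1) \/ hatJ_BL f.

End BLdefs.

From Stdlib Require Import Reals List Psatz Classical FunctionalExtensionality.
From Coquelicot Require Import Coquelicot.
Open Scope R_scope.

(* Both [ext P f] and [hP P] are McShane extensions
   [x |-> max (-|f|_inf, max_(p in P) (f p - K d(p, x)))] of a function on a
   finite set [P].  Such an extension agrees with [f] on [P], has the same sup
   norm, is [K]-Lipschitz, and wherever it is not extremal it equals a cone
   [f p - K d(p, x)], so [P_f := P] works.  It remains to compute the norms of
   an extreme point [f] of the finite-dimensional ball: a perturbation [f +- u]
   staying in the ball forces [u = 0] on [P].  Shifting by constants gives
   [|f|_inf + |f|_L = 1] (BL), resp. [|f|_inf = 1] (FM); scaling [f] towards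
   [-sg] shows that [f] attains [sg |f|_inf] for [sg = +-1] (BL); moving [f]
   at the points where [|f| <> 1] gives [|f|_L = 1] (FM). *)

Lemma Lub_Rbar_real_le (E : R -> Prop) (M : R) :
  (forall r, E r -> r <= M) -> 0 <= M -> real (Lub_Rbar E) <= M.
Proof.
  intros HM HM0. destruct (Lub_Rbar_correct E) as [_ Hlub].
  assert (Hle : Rbar_le (Lub_Rbar E) M) by (apply Hlub; intros r Er; apply HM, Er).
  destruct (Lub_Rbar E); simpl in *; tauto.
Qed.

Lemma Lub_Rbar_real_ge (E : R -> Prop) (M r : R) :
  E r -> (forall s, E s -> s <= M) -> r <= real (Lub_Rbar E).
Proof.
  intros Er HM. destruct (Lub_Rbar_correct E) as [Hub Hlub].
  assert (Hle : Rbar_le (Lub_Rbar E) M) by (apply Hlub; intros s Es; apply HM, Es).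
  specialize (Hub r Er). destruct (Lub_Rbar E); simpl in *; tauto.
Qed.

(* For empty [E] the supremum is [m_infty], whose [real] part is [0]. *)
Lemma Lub_Rbar_real_ge0 (E : R -> Prop) :
  (forall r, E r -> 0 <= r) -> 0 <= real (Lub_Rbar E).
Proof.
  intros H0. destruct (Lub_Rbar_correct E) as [Hub Hlub].
  destruct (classic (exists r, E r)) as [[r Er] | Hempty].
  - specialize (Hub r Er). specialize (H0 r Er).
    destruct (Lub_Rbar E); simpl in *; lra.
  - assert (Hle : Rbar_le (Lub_Rbar E) m_infty).
    { apply Hlub. intros r Er. exfalso. eauto. }
    destruct (Lub_Rbar E); simpl in *; tauto || lra.
Qed.

Section FiniteLists.
Variable T : Type.

Lemma list_argmax (l : list T) (phi : T -> R) : l <> nil ->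
  exists z0, In z0 l /\ forall z, In z l -> phi z <= phi z0.
Proof.
  induction l as [|a l IH]; intros Hl; [contradiction|].
  destruct l as [|b l].
  - exists a. split; [now left|]. intros z [<-|[]]. lra.
  - destruct IH as [z1 [Hz1 Hmax]]; [discriminate|].
    destruct (Rle_dec (phi a) (phi z1)).
    + exists z1. split; [now right|]. intros z [<-|Hz]; auto.
    + exists a. split; [now left|]. intros z [<-|Hz]; [lra|].
      specialize (Hmax z Hz). lra.
Qed.

Lemma exists_In_of_nonnil (l : list T) : l <> nil -> exists z, In z l.
Proof. destruct l as [|z l]; [contradiction|]. exists z. now left. Qed.

Lemma list_upper_bound (l : list T) (phi : T -> R) :
  exists M, forall z, In z l -> phi z <= M.
Proof.
  destruct l as [|a l].
  - exists 0. intros z [].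
  - destruct (list_argmax (a :: l) phi) as [z0 [_ Hmax]]; [discriminate|].
    eauto.
Qed.

Lemma list_pos_lower_bound (l : list T) (Q : T -> Prop) (phi : T -> R) :
  (forall z, In z l -> Q z -> 0 < phi z) ->
  exists e, 0 < e /\ forall z, In z l -> Q z -> e <= phi z.
Proof.
  induction l as [|a l IH]; intros Hpos.
  - exists 1. split; [lra|]. intros z [].
  - destruct IH as [e [He Hle]]; [intros z Hz; apply Hpos; now right|].
    destruct (classic (Q a)) as [Qa | nQa].
    + exists (Rmin e (phi a)). split.
      * apply Rmin_glb_lt; [lra|]. apply Hpos; [now left|exact Qa].
      * intros z [<-|Hz] Qz; [apply Rmin_r|].
        eapply Rle_trans; [apply Rmin_l|]. auto.
    + exists e. split; [lra|]. intros z [<-|Hz] Qz; [contradiction|auto].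
Qed.

Lemma Lub_Rbar_list (l : list T) (phi : T -> R) : l <> nil ->
  exists z0, In z0 l /\
    real (Lub_Rbar (fun r => exists z, In z l /\ r = phi z)) = phi z0 /\
    forall z, In z l -> phi z <= phi z0.
Proof.
  intros Hl. destruct (list_argmax l phi Hl) as [z0 [Hz0 Hmax]].
  exists z0. split; [exact Hz0|]. split; [|exact Hmax].
  rewrite (is_lub_Rbar_unique _ (Finite (phi z0))); [reflexivity|]. split.
  - intros r [z [Hz ->]]. simpl. auto.
  - intros b Hb. apply Hb. eauto.
Qed.

End FiniteLists.

Lemma Rabs_m1 : Rabs (-1) = 1.
Proof. rewrite Rabs_left; lra. Qed.

Lemma sqr_of_Rabs_1 x : Rabs x = 1 -> x * x = 1.
Proof. intros Hx. change (Rsqr x = 1). rewrite Rsqr_abs, Hx. apply Rsqr_1. Qed.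

Lemma Rabs_affine_le (a v s t sg : R) : Rabs sg = 1 ->
  - a <= sg * v <= a - 2 * t -> - t <= s <= t -> t <= 1/2 ->
  Rabs ((1 + s) * v + s * sg) <= (1 + s) * a - s.
Proof.
  intros Hsg Hv Hs Ht.
  rewrite <- (Rmult_1_l (Rabs _)), <- Hsg at 1. rewrite <- Rabs_mult.
  replace (sg * ((1 + s) * v + s * sg)) with ((1 + s) * (sg * v) + s * (sg * sg)) by ring.
  rewrite sqr_of_Rabs_1 by exact Hsg. apply Rabs_le. split; nra.
Qed.

Lemma Rmax_nonexpansive a b c : Rabs (Rmax a c - Rmax b c) <= Rabs (a - b).
Proof.
  unfold Rmax. destruct (Rle_dec a c), (Rle_dec b c); unfold Rabs;
    repeat destruct Rcase_abs; lra.
Qed.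

Section Metric.
Variables (S : Type) (d : S -> S -> R).
Hypothesis Hd : is_metric d.

Lemma dist_ge0 x y : 0 <= d x y.
Proof. apply Hd. Qed.

Lemma dist_self x : d x x = 0.
Proof. now apply Hd. Qed.

Lemma dist_sym x y : d x y = d y x.
Proof. apply Hd. Qed.

Lemma dist_triangle x y z : d x z <= d x y + d y z.
Proof. apply Hd. Qed.

Lemma dist_pos x y : x <> y -> 0 < d x y.
Proof.
  intros Hxy. destruct (dist_ge0 x y) as [|E]; [assumption|].
  exfalso. apply Hxy. now apply Hd.
Qed.


Lemma sup_norm_ge0 (A : S -> Prop) (f : S -> R) : 0 <= sup_norm A f.
Proof. apply Lub_Rbar_real_ge0. intros r (x & _ & ->). apply Rabs_pos. Qed.

Lemma sup_norm_le (A : S -> Prop) (f : S -> R) M :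
  (forall x, A x -> Rabs (f x) <= M) -> 0 <= M -> sup_norm A f <= M.
Proof.
  intros HM HM0. apply Lub_Rbar_real_le; [|exact HM0]. intros r (x & Ax & ->). auto.
Qed.

Lemma Rabs_le_sup_norm (A : S -> Prop) (f : S -> R) :
  is_BL d A f -> forall x, A x -> Rabs (f x) <= sup_norm A f.
Proof.
  intros [[M HM] _] x Ax. apply Lub_Rbar_real_ge with M; [eauto|].
  intros r (y & Ay & ->). auto.
Qed.

Lemma lip_ge0 (A : S -> Prop) (f : S -> R) : 0 <= lip d A f.
Proof.
  apply Lub_Rbar_real_ge0. intros r (x & y & _ & _ & Hxy & ->).
  apply Rdiv_le_0_compat; [apply Rabs_pos|now apply dist_pos].
Qed.

Lemma lip_le (A : S -> Prop) (f : S -> R) K :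
  (forall x y, A x -> A y -> x <> y -> Rabs (f x - f y) <= K * d x y) -> 0 <= K ->
  lip d A f <= K.
Proof.
  intros HK HK0. apply Lub_Rbar_real_le; [|exact HK0].
  intros r (x & y & Ax & Ay & Hxy & ->). apply Rle_div_l; [now apply dist_pos|auto].
Qed.

Lemma Rabs_sub_le_lip (A : S -> Prop) (f : S -> R) : is_BL d A f ->
  forall x y, A x -> A y -> Rabs (f x - f y) <= lip d A f * d x y.
Proof.
  intros [_ [L HL]] x y Ax Ay.
  destruct (classic (x = y)) as [<-|Hxy].
  - rewrite dist_self, Rminus_diag, Rabs_R0, Rmult_0_r. lra.
  - apply Rle_div_l; [now apply dist_pos|].
    apply Lub_Rbar_real_ge with L; [exists x, y; auto|].
    intros r (x' & y' & Ax' & Ay' & Hxy' & ->). apply Rle_div_l; [now apply dist_pos|auto].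
Qed.

Lemma sup_norm_eq_on (A : S -> Prop) (f g : S -> R) :
  (forall x, A x -> f x = g x) -> sup_norm A f = sup_norm A g.
Proof.
  intros Hfg. unfold sup_norm. f_equal. apply Lub_Rbar_eqset.
  intros r. split; intros (x & Ax & ->); exists x; rewrite Hfg; auto.
Qed.

Lemma lip_eq_on (A : S -> Prop) (f g : S -> R) :
  (forall x, A x -> f x = g x) -> lip d A f = lip d A g.
Proof.
  intros Hfg. unfold lip. f_equal. apply Lub_Rbar_eqset.
  intros r. split; intros (x & y & Ax & Ay & Hxy & ->); exists x, y;
    rewrite !Hfg; auto.
Qed.

Lemma sup_norm_mono (A B : S -> Prop) (f : S -> R) :
  (forall x, A x -> B x) -> is_BL d B f -> sup_norm A f <= sup_norm B f.
Proof.
  intros HAB Hf. apply sup_norm_le; [|apply sup_norm_ge0].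
  intros x Ax. apply Rabs_le_sup_norm; auto.
Qed.

Lemma lip_mono (A B : S -> Prop) (f : S -> R) :
  (forall x, A x -> B x) -> is_BL d B f -> lip d A f <= lip d B f.
Proof.
  intros HAB Hf. apply lip_le; [|apply lip_ge0].
  intros x y Ax Ay _. apply Rabs_sub_le_lip; auto.
Qed.

Lemma is_BL_inP (P : list S) (f : S -> R) : is_BL d (inP P) f.
Proof.
  split.
  - destruct (list_upper_bound _ P (fun x => Rabs (f x))) as [M HM]. eauto.
  - destruct (list_upper_bound _ (list_prod P P)
      (fun xy => Rabs (f (fst xy) - f (snd xy)) / d (fst xy) (snd xy))) as [L HL].
    exists L. intros x y Hx Hy. destruct (classic (x = y)) as [<-|Hxy].
    + rewrite dist_self, Rminus_diag, Rabs_R0, Rmult_0_r. lra.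
    + apply Rle_div_l; [now apply dist_pos|]. apply (HL (x, y)). now apply in_prod.
Qed.

Lemma Rabs_le_sup_norm_inP (P : list S) (f : S -> R) p :
  In p P -> Rabs (f p) <= sup_norm (inP P) f.
Proof. apply (Rabs_le_sup_norm (inP P)), is_BL_inP. Qed.

Lemma Rabs_sub_le_lip_inP (P : list S) (f : S -> R) p q :
  In p P -> In q P -> Rabs (f p - f q) <= lip d (inP P) f * d p q.
Proof. apply (Rabs_sub_le_lip (inP P)), is_BL_inP. Qed.

Definition mcshane (P : list S) (f : S -> R) (K c : R) (x : S) : R :=
  Rmax (real (Lub_Rbar (fun r => exists p, In p P /\ r = f p - K * d p x))) c.

Section McShane.
Variables (P : list S) (f : S -> R) (K : R).
Hypothesis HP : P <> nil.
Hypothesis HK : 0 <= K.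
Hypothesis Hf : forall p q, In p P -> In q P -> Rabs (f p - f q) <= K * d p q.

Local Notation a := (sup_norm (inP P) f).
Local Notation F := (mcshane P f K (- a)).

Lemma mcshane_inner_attained x : exists p0, In p0 P /\
  real (Lub_Rbar (fun r => exists p, In p P /\ r = f p - K * d p x)) = f p0 - K * d p0 x /\
  forall p, In p P -> f p - K * d p x <= f p0 - K * d p0 x.
Proof. exact (Lub_Rbar_list _ P (fun p => f p - K * d p x) HP). Qed.

Lemma mcshane_eq p : In p P -> F p = f p.
Proof.
  intros Hp. unfold mcshane.
  destruct (mcshane_inner_attained p) as [p0 [Hp0 [-> Hmax]]].
  assert (Hinner : f p0 - K * d p0 p = f p).
  { apply Rle_antisym.
    - pose proof (Rle_abs (f p0 - f p)). pose proof (Hf p0 p Hp0 Hp). lra.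
    - specialize (Hmax p Hp). rewrite dist_self, Rmult_0_r in Hmax. lra. }
  rewrite Hinner. apply Rmax_left.
  pose proof (Rabs_le_sup_norm_inP P f p Hp) as Hfp. apply Rabs_le_between in Hfp. lra.
Qed.

Lemma mcshane_bounded x : Rabs (F x) <= a.
Proof.
  unfold mcshane. apply Rabs_le. split; [apply Rmax_r|].
  apply Rmax_lub; [|pose proof (sup_norm_ge0 (inP P) f); lra].
  destruct (mcshane_inner_attained x) as [p0 [Hp0 [-> _]]].
  pose proof (Rabs_le_sup_norm_inP P f p0 Hp0). pose proof (Rle_abs (f p0)).
  pose proof (Rmult_le_pos _ _ HK (dist_ge0 p0 x)). lra.
Qed.

Lemma mcshane_lipschitz x y : Rabs (F x - F y) <= K * d x y.
Proof.
  unfold mcshane. eapply Rle_trans; [apply Rmax_nonexpansive|].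
  destruct (mcshane_inner_attained x) as [p0 [Hp0 [-> Hx]]].
  destruct (mcshane_inner_attained y) as [q0 [Hq0 [-> Hy]]].
  specialize (Hx q0 Hq0). specialize (Hy p0 Hp0).
  pose proof (Rmult_le_compat_l K _ _ HK (dist_triangle p0 x y)).
  pose proof (Rmult_le_compat_l K _ _ HK (dist_triangle q0 y x)).
  rewrite (dist_sym y x) in *. apply Rabs_le. lra.
Qed.

Lemma mcshane_above_floor x : - a < F x -> exists p, In p P /\ F x = f p - K * d p x.
Proof.
  unfold mcshane. destruct (mcshane_inner_attained x) as [p0 [Hp0 [-> _]]].
  intros Hlt. exists p0. split; [exact Hp0|].
  unfold Rmax in *. destruct Rle_dec; lra.
Qed.

Lemma mcshane_is_BL : is_BL d whole F.
Proof.
  split; [exists a; intros x _; apply mcshane_bounded|].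
  exists K. intros x y _ _. apply mcshane_lipschitz.
Qed.

Lemma mcshane_sup_norm : sup_norm whole F = a.
Proof.
  apply Rle_antisym.
  - apply sup_norm_le; [intros x _; apply mcshane_bounded|apply sup_norm_ge0].
  - apply Rle_trans with (sup_norm (inP P) F).
    + apply Req_le, sup_norm_eq_on. intros p Hp. symmetry. now apply mcshane_eq.
    + apply sup_norm_mono; [easy|apply mcshane_is_BL].
Qed.

Lemma mcshane_lip_le : lip d whole F <= K.
Proof. apply lip_le; [intros x y _ _ _; apply mcshane_lipschitz|exact HK]. Qed.

Lemma lip_inP_le_mcshane_lip : lip d (inP P) f <= lip d whole F.
Proof.
  apply Rle_trans with (lip d (inP P) F).
  - apply Req_le, lip_eq_on. intros p Hp. symmetry. now apply mcshane_eq.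
  - apply lip_mono; [easy|apply mcshane_is_BL].
Qed.

Lemma mcshane_tight x : ~ Mset F x -> exists p, In p P /\ Rabs (F x - F p) = K * d x p.
Proof.
  unfold Mset. rewrite mcshane_sup_norm. intros HM.
  assert (Hlt : - a < F x).
  { destruct (Rle_lt_or_eq_dec _ _ (Rmax_r _ (- a) : - a <= F x)) as [|E]; [assumption|].
    exfalso. apply HM. rewrite <- E, Rabs_Ropp. apply Rabs_right, Rle_ge, sup_norm_ge0. }
  destruct (mcshane_above_floor x Hlt) as [p [Hp ->]]. exists p. split; [exact Hp|].
  rewrite mcshane_eq by exact Hp.
  replace (f p - K * d p x - f p) with (- (K * d p x)) by ring.
  rewrite Rabs_Ropp, dist_sym.
  apply Rabs_right, Rle_ge, Rmult_le_pos; [exact HK|apply dist_ge0].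
Qed.

End McShane.

Lemma extreme_perturb (A : S -> Prop) (B : (S -> R) -> Prop) (f u : S -> R) :
  extreme A B f ->
  (forall s g, Rabs s = 1 -> (forall x, g x = f x + s * u x) -> B g) ->
  forall x, A x -> u x = 0.
Proof.
  intros [_ Hext] Hpert x Ax.
  assert (Heq : f x + u x = f x - u x).
  { apply (Hext (fun y => f y + u y) (fun y => f y - u y) (1/2)); [| |lra| |exact Ax].
    - apply (Hpert 1); [apply Rabs_R1|intros y; ring].
    - apply (Hpert (-1)); [apply Rabs_m1|intros y; ring].
    - intros y _. field. }
  lra.
Qed.

Lemma ball_BL_of_bounds (P : list S) (g : S -> R) (M K : R) :
  P <> nil -> 0 <= K -> M + K <= 1 ->
  (forall x, In x P -> Rabs (g x) <= M) ->
  (forall x y, In x P -> In y P -> x <> y -> Rabs (g x - g y) <= K * d x y) ->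
  ball_BL d (inP P) g.
Proof.
  intros HP HK HMK HM HL. split; [apply is_BL_inP|]. unfold BL_norm.
  destruct (exists_In_of_nonnil _ P HP) as [p0 Hp0].
  assert (HM0 : 0 <= M) by (pose proof (HM p0 Hp0); pose proof (Rabs_pos (g p0)); lra).
  pose proof (sup_norm_le (inP P) g M HM HM0). pose proof (lip_le (inP P) g K HL HK). lra.
Qed.

Lemma ball_FM_of_bounds (P : list S) (g : S -> R) :
  (forall x, In x P -> Rabs (g x) <= 1) ->
  (forall x y, In x P -> In y P -> x <> y -> Rabs (g x - g y) <= d x y) ->
  ball_FM d (inP P) g.
Proof.
  intros HM HL. split; [apply is_BL_inP|]. apply Rmax_lub.
  - apply sup_norm_le; [exact HM|lra].
  - apply lip_le; [|lra]. intros x y Hx Hy Hxy. rewrite Rmult_1_l. auto.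
Qed.

Lemma Rabs_shift_le (P : list S) (f g : S -> R) c :
  (forall x, g x = f x + c) -> forall x, In x P -> Rabs (g x) <= sup_norm (inP P) f + Rabs c.
Proof.
  intros Hg x Hx. rewrite Hg. eapply Rle_trans; [apply Rabs_triang|].
  apply Rplus_le_compat_r, Rabs_le_sup_norm_inP, Hx.
Qed.

Lemma Rabs_sub_shift_le (P : list S) (f g : S -> R) c :
  (forall x, g x = f x + c) ->
  forall x y, In x P -> In y P -> Rabs (g x - g y) <= lip d (inP P) f * d x y.
Proof.
  intros Hg x y Hx Hy. replace (g x - g y) with (f x - f y) by (rewrite !Hg; ring).
  now apply Rabs_sub_le_lip_inP.
Qed.

Section ExtremeBL.
Variables (P : list S) (f : S -> R).
Hypothesis HP : P <> nil.
Hypothesis Hf : ext_star_BL d P f.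

Local Notation a := (sup_norm (inP P) f).
Local Notation L := (lip d (inP P) f).

Lemma ext_star_BL_norm : a + L = 1.
Proof.
  destruct Hf as [Hext _]. pose proof Hext as [[_ Hn] _]. unfold BL_norm in Hn.
  destruct (Rle_lt_or_eq_dec _ _ Hn) as [Hlt|]; [exfalso|assumption].
  destruct (exists_In_of_nonnil _ P HP) as [p0 Hp0].
  assert (He : 1 - (a + L) = 0).
  { apply (extreme_perturb _ _ _ (fun _ => 1 - (a + L)) Hext) with p0; [|exact Hp0].
    intros s g Hs Hg. apply (ball_BL_of_bounds P g (1 - L) L HP (lip_ge0 _ _)); [lra| |].
    - intros x Hx. pose proof (Rabs_shift_le P f g _ Hg x Hx) as Hgx.
      rewrite Rabs_mult, Hs, (Rabs_right (1 - (a + L))) in Hgx by lra. lra.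
    - intros x y Hx Hy _. exact (Rabs_sub_shift_le P f g _ Hg x y Hx Hy). }
  lra.
Qed.

(* The perturbation [f +- t (f + sg)] stays in the ball as long as [f] stays
   away from [sg a]; it vanishes only where [f = -sg], excluded by [ext_*]. *)
Lemma ext_star_BL_attains sg : Rabs sg = 1 -> exists p, In p P /\ f p = sg * a.
Proof.
  intros Hsg. destruct Hf as [Hext Hnot]. apply NNPP. intros Hno.
  assert (Hlt : forall p, In p P -> sg * f p < a).
  { intros p Hp.
    assert (Hle : sg * f p <= a).
    { pose proof (Rle_abs (sg * f p)). pose proof (Rabs_le_sup_norm_inP P f p Hp).
      rewrite Rabs_mult, Hsg in *. lra. }
    destruct (Rle_lt_or_eq_dec _ _ Hle) as [|Heq]; [assumption|].
    exfalso. apply Hno. exists p. split; [exact Hp|].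
    rewrite <- Heq, <- Rmult_assoc, (sqr_of_Rabs_1 sg Hsg). ring. }
  destruct (list_pos_lower_bound _ P (fun _ => True) (fun p => (a - sg * f p) / 2))
    as [e [He Hle]]; [intros p Hp _; specialize (Hlt p Hp); lra|].
  set (t := Rmin (1/2) e).
  assert (Ht : 0 < t <= 1/2) by (split; [apply Rmin_glb_lt|apply Rmin_l]; lra).
  assert (Hzero : forall p, In p P -> t * (f p + sg) = 0).
  { apply (extreme_perturb _ _ _ (fun x => t * (f x + sg)) Hext). intros s g Hs Hg.
    assert (Hst : - t <= s * t <= t).
    { apply Rabs_le_between. rewrite Rabs_mult, Hs, Rabs_right; lra. }
    assert (Hg' : forall x, g x = (1 + s * t) * f x + s * t * sg)
      by (intros x; rewrite Hg; ring).
    apply (ball_BL_of_bounds P g ((1 + s * t) * a - s * t) ((1 + s * t) * L) HP).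
    - apply Rmult_le_pos; [lra|apply lip_ge0].
    - pose proof ext_star_BL_norm. nra.
    - intros x Hx. rewrite Hg'. apply Rabs_affine_le with t; [exact Hsg| |lra|lra].
      specialize (Hle x Hx I). pose proof (Rmin_r (1/2) e : t <= e).
      pose proof (Rabs_le_sup_norm_inP P f x Hx) as Hfx.
      rewrite <- (Rmult_1_l (Rabs (f x))), <- Hsg, <- Rabs_mult in Hfx.
      apply Rabs_le_between in Hfx. lra.
    - intros x y Hx Hy _. rewrite !Hg'.
      replace ((1 + s * t) * f x + s * t * sg - ((1 + s * t) * f y + s * t * sg))
        with ((1 + s * t) * (f x - f y)) by ring.
      rewrite Rabs_mult, Rabs_right, Rmult_assoc by lra.
      apply Rmult_le_compat_l; [lra|]. now apply Rabs_sub_le_lip_inP. }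
  apply Hnot. intros p Hp.
  assert (Hfp : f p = - sg).
  { destruct (Rmult_integral _ _ (Hzero p Hp)); lra. }
  rewrite Hfp, Rabs_Ropp. exact Hsg.
Qed.

End ExtremeBL.

Section ExtremeFM.
Variables (P : list S) (f : S -> R).
Hypothesis HP : P <> nil.
Hypothesis Hf : ext_star_FM d P f.

Local Notation a := (sup_norm (inP P) f).
Local Notation L := (lip d (inP P) f).

Lemma ext_star_FM_sup_norm_le : a <= 1.
Proof. destruct Hf as [[[_ Hn] _] _]. eapply Rle_trans; [apply Rmax_l|exact Hn]. Qed.

Lemma ext_star_FM_lip_le : L <= 1.
Proof. destruct Hf as [[[_ Hn] _] _]. eapply Rle_trans; [apply Rmax_r|exact Hn]. Qed.

Lemma ext_star_FM_sup_norm : a = 1.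
Proof.
  destruct Hf as [Hext _].
  destruct (Rle_lt_or_eq_dec _ _ ext_star_FM_sup_norm_le) as [Hlt|]; [exfalso|assumption].
  destruct (exists_In_of_nonnil _ P HP) as [p0 Hp0].
  assert (He : 1 - a = 0).
  { apply (extreme_perturb _ _ _ (fun _ => 1 - a) Hext) with p0; [|exact Hp0].
    intros s g Hs Hg. apply ball_FM_of_bounds.
    - intros x Hx. pose proof (Rabs_shift_le P f g _ Hg x Hx) as Hgx.
      rewrite Rabs_mult, Hs, (Rabs_right (1 - a)) in Hgx by lra. lra.
    - intros x y Hx Hy _. pose proof (Rabs_sub_shift_le P f g _ Hg x y Hx Hy).
      pose proof ext_star_FM_lip_le. pose proof (dist_ge0 x y). nra. }
  lra.
Qed.

Lemma ext_star_FM_lip : L = 1.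
Proof.
  destruct Hf as [Hext Hnot].
  destruct (Rle_lt_or_eq_dec _ _ ext_star_FM_lip_le) as [Hlt|]; [exfalso|assumption].
  destruct (list_pos_lower_bound _ P (fun p => Rabs (f p) <> 1) (fun p => 1 - Rabs (f p)))
    as [e1 [He1 Hle1]].
  { intros p Hp Hp1. pose proof (Rabs_le_sup_norm_inP P f p Hp).
    pose proof ext_star_FM_sup_norm_le. destruct (Rle_lt_or_eq_dec (Rabs (f p)) 1); lra. }
  destruct (list_pos_lower_bound _ (list_prod P P) (fun pq => fst pq <> snd pq)
              (fun pq => (1 - L) * d (fst pq) (snd pq))) as [e2 [He2 Hle2]].
  { intros [p q] _ Hpq. apply Rmult_lt_0_compat; [lra|now apply dist_pos]. }
  set (e := Rmin e1 e2).
  pose proof (Rmin_l e1 e2 : e <= e1). pose proof (Rmin_r e1 e2 : e <= e2).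
  assert (He : 0 < e) by (apply Rmin_glb_lt; assumption).
  set (w := fun x => if Req_dec_T (Rabs (f x)) 1 then 0 else e).
  assert (Hzero : forall q, In q P -> w q = 0).
  { apply (extreme_perturb _ _ _ w Hext). intros s g Hs Hg. apply ball_FM_of_bounds.
    - intros x Hx. rewrite Hg. unfold w.
      destruct Req_dec_T as [E|NE]; [rewrite Rmult_0_r, Rplus_0_r; lra|].
      eapply Rle_trans; [apply Rabs_triang|].
      rewrite Rabs_mult, Hs, Rmult_1_l, (Rabs_right e) by lra.
      pose proof (Hle1 x Hx NE). lra.
    - intros x y Hx Hy Hxy. rewrite !Hg.
      replace (f x + s * w x - (f y + s * w y)) with ((f x - f y) + s * (w x - w y)) by ring.
      eapply Rle_trans; [apply Rabs_triang|]. rewrite Rabs_mult, Hs, Rmult_1_l.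
      assert (Hw : Rabs (w x - w y) <= e).
      { unfold w. repeat destruct Req_dec_T; rewrite ?Rminus_diag, ?Rabs_R0;
          rewrite ?Rminus_0_l, ?Rminus_0_r, ?Rabs_Ropp, ?Rabs_right; lra. }
      pose proof (Hle2 (x, y) (in_prod _ _ _ _ Hx Hy) Hxy). simpl in *.
      pose proof (Rabs_sub_le_lip_inP P f x y Hx Hy). lra. }
  apply Hnot. intros q Hq. apply NNPP. intros Hq1.
  specialize (Hzero q Hq). unfold w in Hzero. destruct Req_dec_T; [contradiction|lra].
Qed.

End ExtremeFM.

Lemma ext_mcshane P f : ext d P f = mcshane P f (lip d (inP P) f) (- sup_norm (inP P) f).
Proof. reflexivity. Qed.

Lemma hP_mcshane P : hP d P = mcshane P (fun _ => 1) 1 (-1).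
Proof.
  apply functional_extensionality. intros x. unfold hP, mcshane. rewrite Rmax_comm.
  do 2 f_equal. apply Lub_Rbar_eqset. intros r.
  split; intros [p [Hp ->]]; exists p; split; auto; rewrite dist_sym; ring.
Qed.

Lemma mcshane_J_FM P f : P <> nil ->
  (forall p q, In p P -> In q P -> Rabs (f p - f q) <= d p q) ->
  sup_norm (inP P) f = 1 -> J_FM d (mcshane P f 1 (-1)).
Proof.
  intros HP Hf Ha. replace (-1) with (- sup_norm (inP P) f) by (rewrite Ha; ring).
  assert (HK : 0 <= 1) by lra.
  assert (Hf1 : forall p q, In p P -> In q P -> Rabs (f p - f q) <= 1 * d p q).
  { intros p q Hp Hq. rewrite Rmult_1_l. auto. }
  pose proof (mcshane_sup_norm P f 1 HP HK Hf1) as Hsup.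
  split; [split|split; [rewrite Hsup; exact Ha|]].
  - apply mcshane_is_BL; assumption.
  - apply Rmax_lub; [rewrite Hsup; lra|]. apply mcshane_lip_le; assumption.
  - exists P. split; [exact HP|]. intros x Hx.
    destruct (mcshane_tight P f 1 HP HK Hf1 x Hx) as [p [Hp E]].
    exists p. split; [exact Hp|]. rewrite E. ring.
Qed.

Lemma ext_star_FM_J P f : P <> nil -> ext_star_FM d P f -> J_FM d (ext d P f).
Proof.
  intros HP Hf.
  rewrite ext_mcshane, (ext_star_FM_lip P f Hf), (ext_star_FM_sup_norm P f HP Hf).
  apply mcshane_J_FM; [exact HP| |exact (ext_star_FM_sup_norm P f HP Hf)].
  intros p q Hp Hq. pose proof (Rabs_sub_le_lip_inP P f p q Hp Hq) as Hpq.
  rewrite (ext_star_FM_lip P f Hf), Rmult_1_l in Hpq. exact Hpq.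
Qed.

Lemma hP_J_FM P : P <> nil -> J_FM d (hP d P).
Proof.
  intros HP. rewrite hP_mcshane. apply mcshane_J_FM; [exact HP| |].
  - intros p q _ _. rewrite Rminus_diag, Rabs_R0. apply dist_ge0.
  - destruct (exists_In_of_nonnil _ P HP) as [p0 Hp0]. apply Rle_antisym.
    + apply sup_norm_le; [intros x _; rewrite Rabs_R1|]; lra.
    + pose proof (Rabs_le_sup_norm_inP P (fun _ => 1) p0 Hp0) as H1.
      cbv beta in H1. rewrite Rabs_R1 in H1. exact H1.
Qed.

Lemma unimodular_J_FM g : inhabited S -> ball_FM d whole g ->
  (forall x, Rabs (g x) = 1) -> J_FM d g.
Proof.
  intros [x0] Hg Hg1.
  assert (Hsup : sup_norm whole g = 1).
  { apply Rle_antisym.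
    - apply sup_norm_le; [intros x _; rewrite Hg1|]; lra.
    - rewrite <- (Hg1 x0). apply Rabs_le_sup_norm; [apply Hg|exact I]. }
  split; [exact Hg|split; [exact Hsup|]].
  exists (x0 :: nil). split; [discriminate|].
  intros x Hx. exfalso. apply Hx. unfold Mset. rewrite Hsup. apply Hg1.
Qed.

Lemma ext_star_BL_hatJ P f : P <> nil -> ext_star_BL d P f -> hatJ_BL d (ext d P f).
Proof.
  intros HP Hf. rewrite ext_mcshane.
  pose proof (lip_ge0 (inP P) f) as HK.
  pose proof (Rabs_sub_le_lip_inP P f) as Hlip.
  pose proof (mcshane_sup_norm P f _ HP HK Hlip) as Hsup.
  assert (HL : lip d whole (mcshane P f (lip d (inP P) f) (- sup_norm (inP P) f))
               = lip d (inP P) f).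
  { apply Rle_antisym; [apply mcshane_lip_le|apply lip_inP_le_mcshane_lip]; assumption. }
  pose proof (ext_star_BL_norm P f HP Hf) as Hnorm.
  split; [|split; [|split]].
  - apply mcshane_is_BL; assumption.
  - unfold BL_norm. rewrite Hsup, HL. exact Hnorm.
  - intros r. unfold Mset. rewrite Hsup. split.
    + intros (x & Hx & <-). unfold Rabs in Hx. destruct Rcase_abs in Hx; [right|left]; lra.
    + intros Hr.
      assert (Hsg : exists sg, Rabs sg = 1 /\ r = sg * sup_norm (inP P) f).
      { destruct Hr as [-> | ->]; [exists 1|exists (-1)]; split;
          [apply Rabs_R1|ring|apply Rabs_m1|ring]. }
      destruct Hsg as [sg [Hsg1 ->]].
      destruct (ext_star_BL_attains P f HP Hf sg Hsg1) as [p [Hp Hfp]].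
      exists p. rewrite mcshane_eq, Hfp by assumption. split; [|reflexivity].
      rewrite Rabs_mult, Hsg1, Rmult_1_l. apply Rabs_right, Rle_ge, sup_norm_ge0.
  - exists P. split; [exact HP|]. intros x Hx.
    destruct (mcshane_tight P f _ HP HK Hlip x Hx) as [p [Hp E]].
    exists p. split; [exact Hp|]. rewrite E, Hsup. f_equal. lra.
Qed.

End Metric.

Theorem proposition5p1 (S : Type) (d : S -> S -> R) (Hd : is_metric d)
  (HS : inhabited S) :
  (forall g : S -> R, E_BL d g -> J_BL d g) /\
  (forall g : S -> R, E_FM d g -> J_FM d g).
Proof.
  split.
  - intros g [[P [f [HP [Hf Hg]]]] | [Hg | Hg]].
    + right; right.
      replace g with (ext d P f) by (symmetry; now apply functional_extensionality).
      now apply ext_star_BL_hatJ.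
    + now left.
    + now right; left.
  - intros g [[P [f [HP [Hf Hg]]]] | [[Hball Hg] | [P [HP Hg]]]].
    + replace g with (ext d P f) by (symmetry; now apply functional_extensionality).
      now apply ext_star_FM_J.
    + now apply unimodular_J_FM.
    + replace g with (hP d P) by (symmetry; now apply functional_extensionality).
      now apply hP_J_FM.
Qed.
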